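(* Let $n\ge3$ and let $g=(g_{ab})$ be a smooth Riemannian metric (symmetric positive definite matrix function) on an open set $U\subset\mathbb R^n$. Let $L=g^{ab}\partial_{ab}$ and define the linear operator $\tilde\Gamma^k$ on symmetric matrix functions $h$ by $\tilde\Gamma^k(h)=-\frac{n-2}{2}\frac{g^{kr}g^{ka}g^{kb}}{g^{kk}}\partial_rh_{ab}$ (no summation over $k$). Let $Q$ be the principal part (fourth order part) of the linear operator $$h_{ab}\mapsto L^2(h_{ab})-L\big[\partial_a(g_{bl}\tilde\Gamma^l(h))+\partial_b(g_{al}\tilde\Gamma^l(h))\big]+\frac{n-2}{n-1}\partial_{abl}\tilde\Gamma^l(h)+\frac1{n-1}L(\partial_l\tilde\Gamma^l(h))\,g_{ab}$$ acting on symmetric $n\times n$ matrix functions $h$, where $L^2=g^{ab}g^{cd}\partial_{abcd}$. Then $Q$ is elliptic of order $4$, i.e. for every $x\in U$ and $\xi\ne0$ its principal symbol is an invertible linear map on symmetric matrices. *)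

From HB Require Import structures.
From mathcomp Require Import all_boot all_order all_algebra.
From mathcomp Require Import all_classical all_reals all_analysis.
Set Implicit Arguments. Unset Strict Implicit. Unset Printing Implicit Defensive.
Import Order.TTheory GRing.Theory Num.Theory.
Import numFieldNormedType.Exports.
Local Open Scope ring_scope.

Section Defs.
Variables (R : realType) (n : nat).

Definition symmx (A : 'M[R]_n) : Prop := A^T = A.

Definition posdefmx (A : 'M[R]_n) : Prop :=
  symmx A /\ forall v : 'rV[R]_n, v != 0 -> 0 < (v *m A *m v^T) 0 0.

(* Symbol of tilde-Gamma^k at covector xi (d_r replaced by xi_r), metric g,
   g^{ab} = entries of invmx g; no summation over k:
   -(n-2)/2 * g^{kr} g^{ka} g^{kb} / g^{kk} * xi_r h_{ab}. *)
Definition Gtilde_symb (g : 'M[R]_n) (xi : 'rV[R]_n) (h : 'M[R]_n) (k : 'I_n) : R :=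
  let G := invmx g in
  - ((n%:R - 2) / 2) *
    ((\sum_(r < n) \sum_(a < n) \sum_(b < n) G k r * G k a * G k b * xi 0 r * h a b)
     / G k k).

Definition L_symb (g : 'M[R]_n) (xi : 'rV[R]_n) : R :=
  \sum_(a < n) \sum_(b < n) invmx g a b * xi 0 a * xi 0 b.

(* principal (fourth order) symbol of the operator Q at (g(x), xi):
   L^2 h_ab - L[d_a(g_bl Gt^l(h)) + d_b(g_al Gt^l(h))]
   + (n-2)/(n-1) d_abl Gt^l(h) + 1/(n-1) L(d_l Gt^l(h)) g_ab,
   with every derivative replaced by xi (derivatives falling on g are of lower
   order and do not contribute). *)
Definition Q_symb (g : 'M[R]_n) (xi : 'rV[R]_n) (h : 'M[R]_n) : 'M[R]_n :=
  \matrix_(a < n, b < n)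
    (L_symb g xi ^+ 2 * h a b
     - L_symb g xi * (xi 0 a * \sum_(l < n) g b l * Gtilde_symb g xi h l
                      + xi 0 b * \sum_(l < n) g a l * Gtilde_symb g xi h l)
     + (n%:R - 2) / (n%:R - 1) * (xi 0 a * xi 0 b *
                                  \sum_(l < n) xi 0 l * Gtilde_symb g xi h l)
     + 1 / (n%:R - 1) * (L_symb g xi * \sum_(l < n) xi 0 l * Gtilde_symb g xi h l)
       * g a b).

Definition invertible_on_sym (f : 'M[R]_n -> 'M[R]_n) : Prop :=
  (forall h, symmx h -> symmx (f h)) /\
  (forall K, symmx K -> exists h, symmx h /\ f h = K /\
        forall h', symmx h' -> f h' = K -> h' = h).

End Defs.

From HB Require Import structures.
From mathcomp Require Import all_boot all_order all_algebra.
From mathcomp Require Import all_classical all_reals all_analysis.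
From mathcomp Require Import ring lra.
Import Order.TTheory GRing.Theory Num.Theory.
Import numFieldNormedType.Exports.
Set Implicit Arguments. Unset Strict Implicit. Unset Printing Implicit Defensive.
Local Open Scope ring_scope.

(* Q(xi) is linear and commutes with transposition, so it is enough to show
   that its kernel on all n x n matrices is trivial.  Put N = g^{ab} xi_a xi_b,
   eta = g^{-1} xi, gam = Gtilde(h) and s = xi_l gam^l.  If Q(xi) h = 0, then h
   is a combination of xi (x) g gam + g gam (x) xi, xi (x) xi and g.  Contracting
   this with g^{ka} g^{kb} and substituting into the definition of Gtilde gives
   N gam^k = (n-2)/(2(n-1)) s eta^k; contracting once more with xi gives
   N s = (n-2)/(2(n-1)) N s, so s = 0, hence gam = 0 and h = 0. *)

Section PositiveDefinite.
Variables (R : realType) (n : nat).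
Implicit Types (A g : 'M[R]_n) (x : 'rV[R]_n).

Lemma quad_formE A x :
  \sum_a \sum_b A a b * x 0 a * x 0 b = (x *m A *m x^T) 0 0.
Proof.
rewrite !mxE exchange_big; apply: eq_bigr => b _.
by rewrite !mxE mulr_suml; apply: eq_bigr => a _; rewrite ?mxE; ring.
Qed.

Lemma posdefmx_unit g : posdefmx g -> g \in unitmx.
Proof.
move=> [_ pg]; rewrite unitmxE unitfE; apply/negP => /det0P [v vn0 vg0].
by have := pg v vn0; rewrite vg0 mul0mx mxE ltxx.
Qed.

Lemma symmx_invmx g : symmx g -> symmx (invmx g).
Proof. by rewrite /symmx trmx_inv => ->. Qed.

Lemma posdefmx_inv g : posdefmx g -> posdefmx (invmx g).
Proof.
move=> pd; have gu := posdefmx_unit pd; case: pd => sg pg.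
split=> [|v vn0]; first exact: symmx_invmx.
have wn0 : v *m invmx g != 0.
  apply: contra vn0 => /eqP w0; apply/eqP.
  by rewrite -[v]mulmx1 -(mulVmx gu) mulmxA w0 mul0mx.
have := pg _ wn0; rewrite trmx_mul (symmx_invmx sg).
by rewrite -!mulmxA (mulmxA g) (mulmxV gu) mul1mx.
Qed.

Lemma posdefmx_diag_gt0 g k : posdefmx g -> 0 < g k k.
Proof.
move=> [_ pg]; have en0 : (delta_mx 0 k : 'rV[R]_n) != 0.
  by apply/eqP => /matrixP /(_ 0 k); rewrite !mxE !eqxx => /eqP; rewrite oner_eq0.
by have := pg _ en0; rewrite trmx_delta -rowE -colE !mxE.
Qed.

End PositiveDefinite.

Lemma double_sum_mul (R : comRingType) (n : nat) (x y f1 f2 : 'I_n -> R) :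
  \sum_a \sum_b x a * y b * (f1 a * f2 b) =
  (\sum_a x a * f1 a) * (\sum_b y b * f2 b).
Proof.
rewrite mulr_suml; apply: eq_bigr => a _.
by rewrite mulr_sumr; apply: eq_bigr => b _; ring.
Qed.

Section Contractions.
Variables (R : realType) (n : nat) (g : 'M[R]_n).
Hypothesis g_unit : g \in unitmx.

Definition raise_index (xi : 'rV[R]_n) (k : 'I_n) : R :=
  \sum_r invmx g k r * xi 0 r.

Lemma contract_invmx_mx (f : 'I_n -> R) k :
  \sum_b invmx g k b * \sum_l g b l * f l = f k.
Proof.
have delta_f : \sum_l (1%:M : 'M[R]_n) k l * f l = f k.
  rewrite (bigD1 k) //= big1 ?addr0; first by rewrite mxE eqxx mul1r.
  by move=> i ik; rewrite mxE eq_sym (negbTE ik) mul0r.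
rewrite -[RHS]delta_f -(mulVmx g_unit).
under eq_bigr do rewrite mulr_sumr.
rewrite exchange_big /=; apply: eq_bigr => l _; rewrite mxE mulr_suml.
by apply: eq_bigr => b _; ring.
Qed.

Lemma contract_invmx_diag k : symmx g ->
  \sum_a \sum_b invmx g k a * invmx g k b * g a b = invmx g k k.
Proof.
move=> /symmx_invmx sG.
have : (invmx g *m g *m (invmx g)^T) k k = invmx g k k.
  by rewrite mulVmx // mul1mx sG.
move <-; rewrite mxE exchange_big /=; apply: eq_bigr => b _.
by rewrite !mxE mulr_suml; apply: eq_bigr => a _; ring.
Qed.

Lemma contract_raise_index (xi : 'rV[R]_n) :
  \sum_l xi 0 l * raise_index xi l = L_symb g xi.
Proof.
apply: eq_bigr => a _; rewrite mulr_sumr.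
by apply: eq_bigr => b _; ring.
Qed.

Lemma Gtilde_symbE (xi : 'rV[R]_n) (h : 'M[R]_n) k :
  Gtilde_symb g xi h k = - ((n%:R - 2) / 2) *
    (raise_index xi k * (\sum_a \sum_b invmx g k a * invmx g k b * h a b)
     / invmx g k k).
Proof.
rewrite /Gtilde_symb; congr (_ * (_ / _)).
rewrite mulr_suml; apply: eq_bigr => r _; rewrite mulr_sumr.
apply: eq_bigr => a _; rewrite mulr_sumr; apply: eq_bigr => b _; ring.
Qed.

End Contractions.

Section Linearity.
Variables (R : realType) (n : nat) (g : 'M[R]_n) (xi : 'rV[R]_n).

Lemma Gtilde_symb_linear (c : R) (u v : 'M[R]_n) k :
  Gtilde_symb g xi (c *: u + v) k =
  c * Gtilde_symb g xi u k + Gtilde_symb g xi v k.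
Proof.
rewrite /Gtilde_symb; set G := invmx g.
have termE r a b : G k r * G k a * G k b * xi 0 r * (c *: u + v) a b =
    c * (G k r * G k a * G k b * xi 0 r * u a b)
    + G k r * G k a * G k b * xi 0 r * v a b.
  by rewrite !mxE; ring.
under eq_bigr do under eq_bigr do under eq_bigr do rewrite termE.
under eq_bigr do under eq_bigr do rewrite big_split -mulr_sumr /=.
under eq_bigr do rewrite big_split -mulr_sumr /=.
by rewrite big_split -mulr_sumr /=; ring.
Qed.

Lemma sum_Gtilde_symb_linear (c : R) (f : 'I_n -> R) u v :
  \sum_l f l * Gtilde_symb g xi (c *: u + v) l =
  c * \sum_l f l * Gtilde_symb g xi u l + \sum_l f l * Gtilde_symb g xi v l.
Proof.
rewrite mulr_sumr -big_split; apply: eq_bigr => l _ /=.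
by rewrite Gtilde_symb_linear; ring.
Qed.

Lemma Q_symb_linear : linear (Q_symb g xi).
Proof.
by move=> c u v; apply/matrixP=> a b; rewrite !mxE !sum_Gtilde_symb_linear; ring.
Qed.

HB.instance Definition _ :=
  GRing.isLinear.Build R 'M[R]_n 'M[R]_n *:%R (Q_symb g xi) Q_symb_linear.

Lemma Gtilde_symb_tr h k : Gtilde_symb g xi h^T k = Gtilde_symb g xi h k.
Proof.
rewrite /Gtilde_symb; congr (_ * (_ / _)); apply: eq_bigr => r _.
rewrite exchange_big; apply: eq_bigr => a _; apply: eq_bigr => b _.
by rewrite !mxE; ring.
Qed.

Lemma Q_symb_tr h : symmx g -> Q_symb g xi h^T = (Q_symb g xi h)^T.
Proof.
move=> sg; apply/matrixP => a b.
have gC : g a b = g b a by rewrite -[in LHS]sg mxE.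
rewrite !mxE gC.
have trE (f : 'I_n -> R) :
    \sum_l f l * Gtilde_symb g xi h^T l = \sum_l f l * Gtilde_symb g xi h l.
  by apply: eq_bigr => l _; rewrite Gtilde_symb_tr.
rewrite !trE; ring.
Qed.

End Linearity.

Lemma injective_tr_invertible_on_sym (R : realType) (n : nat)
    (f : {linear 'M[R]_n -> 'M[R]_n}) :
  injective f -> (forall h, f h^T = (f h)^T) -> invertible_on_sym f.
Proof.
move=> f_inj f_tr; split=> [h sh|K sK]; first by rewrite /symmx -f_tr sh.
pose F : 'End('M[R]_n) := linfun f.
have kerF : lker F == 0%VS by apply/lker0P => u v; rewrite !lfunE; apply: f_inj.
have FK := lker0_lfunVK kerF K; rewrite lfunE /= in FK.
exists ((F^-1)%VF K); split; last split => //.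
  by apply: f_inj; rewrite f_tr FK sK.
by move=> h' _ e; apply: f_inj; rewrite e FK.
Qed.

Section Kernel.
Variables (R : realType) (n : nat) (g : 'M[R]_n) (xi : 'rV[R]_n) (h : 'M[R]_n).
Hypotheses (n_ge2 : (2 <= n)%N) (g_posdef : posdefmx g) (xi_neq0 : xi != 0).
Hypothesis Qh0 : Q_symb g xi h = 0.

Let N := L_symb g xi.
Let gam := Gtilde_symb g xi h.
Let s := \sum_l xi 0 l * gam l.
Let v b := \sum_l g b l * gam l.
Let eta := raise_index g xi.
Let c := (n%:R - 2) / (2 * (n%:R - 1)) : R.

Let g_unit : g \in unitmx. Proof. exact: posdefmx_unit. Qed.
Let g_sym : symmx g. Proof. by case: g_posdef. Qed.

Let N_gt0 : 0 < N.
Proof. by rewrite /N /L_symb quad_formE; apply: (posdefmx_inv g_posdef).2. Qed.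

Let N_neq0 : N != 0. Proof. exact: lt0r_neq0. Qed.

Let n2_ge0 : 0 <= n%:R - 2 :> R.
Proof. by rewrite subr_ge0 (ler_nat R 2 n). Qed.

Let n1_neq0 : n%:R - 1 != 0 :> R.
Proof. by apply/lt0r_neq0; move: n2_ge0; lra. Qed.

Lemma kernel_entry a b : h a b =
  (N * (xi 0 a * v b + xi 0 b * v a) - (n%:R - 2) / (n%:R - 1) * (xi 0 a * xi 0 b * s)
   - 1 / (n%:R - 1) * (N * s) * g a b) / N ^+ 2.
Proof.
have e := congr1 (fun M : 'M[R]_n => M a b) Qh0; rewrite /= !mxE in e.
apply: (mulIf (expf_neq0 2 N_neq0)); rewrite divfK ?expf_neq0 //.
by apply/eqP; rewrite -subr_eq0; apply/eqP; rewrite -[RHS]e /v /s /gam /N; ring.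
Qed.

Lemma kernel_contraction k :
  \sum_a \sum_b invmx g k a * invmx g k b * h a b =
  (N * (2 * eta k * gam k) - (n%:R - 2) / (n%:R - 1) * s * eta k ^+ 2
   - 1 / (n%:R - 1) * (N * s) * invmx g k k) / N ^+ 2.
Proof.
set G := invmx g.
have termE a b : G k a * G k b * h a b =
    (N / N ^+ 2) * (G k a * G k b * (xi 0 a * v b))
    + (N / N ^+ 2) * (G k a * G k b * (v a * xi 0 b))
    - ((n%:R - 2) / (n%:R - 1) * s / N ^+ 2) * (G k a * G k b * (xi 0 a * xi 0 b))
    - (1 / (n%:R - 1) * (N * s) / N ^+ 2) * (G k a * G k b * g a b).
  by rewrite kernel_entry; ring.
under eq_bigr do under eq_bigr do rewrite termE.
under eq_bigr do rewrite !big_split /= !sumrN -!mulr_sumr.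
rewrite !big_split /= !sumrN -!mulr_sumr !double_sum_mul.
rewrite (contract_invmx_diag g_unit _ g_sym) /v !(contract_invmx_mx g_unit).
by rewrite /eta /raise_index -/G; field; rewrite N_neq0 n1_neq0.
Qed.

Lemma kernel_Gtilde k : N * gam k = c * s * eta k.
Proof.
set G := invmx g.
have Gkk_gt0 : 0 < G k k by apply/posdefmx_diag_gt0/posdefmx_inv.
have D_gt0 : 0 < N * G k k + (n%:R - 2) * eta k ^+ 2.
  by apply: ltr_pwDl; [exact: mulr_gt0 | exact: mulr_ge0 n2_ge0 (sqr_ge0 _)].
have gamE : gam k * G k k * N ^+ 2 = - ((n%:R - 2) / 2) * (eta k *
    (N * (2 * eta k * gam k) - (n%:R - 2) / (n%:R - 1) * s * eta k ^+ 2
     - 1 / (n%:R - 1) * (N * s) * G k k)).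
  have gamkE : gam k = - ((n%:R - 2) / 2) * (eta k *
      (\sum_a \sum_b G k a * G k b * h a b) / G k k) by apply: Gtilde_symbE.
  by rewrite {1}gamkE kernel_contraction; field; rewrite n1_neq0 lt0r_neq0.
(* gamE is linear in gam k, with the positive coefficient D_gt0 once expanded *)
apply: (mulfI (lt0r_neq0 D_gt0)).
have -> : (N * G k k + (n%:R - 2) * eta k ^+ 2) * (N * gam k) =
  gam k * G k k * N ^+ 2 + (n%:R - 2) * N * eta k ^+ 2 * gam k by ring.
by rewrite gamE /c; field; rewrite n1_neq0.
Qed.

Lemma kernel_trace : s = 0.
Proof.
have sNE : N * s = c * s * N.
  rewrite -[N in RHS](contract_raise_index g xi) mulr_sumr [in LHS]/s mulr_sumr.
  by apply: eq_bigr => l _; rewrite mulrCA kernel_Gtilde /eta; ring.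
have : s * (N * n%:R) == 0.
  have -> : s * (N * n%:R) = 2 * (n%:R - 1) * (N * s) - (n%:R - 2) * s * N by ring.
  by rewrite sNE /c; apply/eqP; field.
rewrite !mulf_eq0 (negbTE N_neq0) pnatr_eq0 /= => /orP [/eqP // | /eqP n0].
by move: n_ge2; rewrite n0.
Qed.

Lemma Q_symb_ker0 : h = 0.
Proof.
have gam0 k : gam k = 0.
  by apply/eqP; have := kernel_Gtilde k; rewrite kernel_trace mulr0 mul0r => /eqP;
    rewrite mulf_eq0 (negbTE N_neq0).
have v0 b : v b = 0 by rewrite /v big1 // => l _; rewrite gam0 mulr0.
apply/matrixP => a b.
by rewrite kernel_entry !v0 kernel_trace mxE; field; rewrite N_neq0.
Qed.

End Kernel.

Theorem lemma2p3 (R : realType) (n : nat) (hn : (3 <= n)%N)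
  (U : set 'rV[R]_n) (hU : open U) (g : 'rV[R]_n -> 'M[R]_n)
  (hg : forall x, U x -> posdefmx (g x)) :
  forall x, U x -> forall xi : 'rV[R]_n, xi != 0 ->
    invertible_on_sym (Q_symb (g x) xi).
Proof.
move=> x Ux xi xi_neq0; have [g_sym _] := hg x Ux.
apply: injective_tr_invertible_on_sym => [u v Quv|h]; last exact: Q_symb_tr.
apply/eqP; rewrite -subr_eq0; apply/eqP.
apply: (Q_symb_ker0 (ltnW hn) (hg x Ux) xi_neq0).
by rewrite linearB /= Quv subrr.
Qed.
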